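(* Let $f(t_1,t_2)=[t_1,t_2,t_{i_3},\ldots,t_{i_k}]$ be a left normed commutator with $i_j\in\{1,2\}$ (and $i_1=1$, $i_2=2$), with $\deg_{t_1}f=n$, $\deg_{t_2}f=m$, $n+m=k\ge 2$. Put $i=i_k$. Then $f(C_1,C_2)=(x_1'-x_1)^{n-1}(x_2'-x_2)^{m-1}A(k)$, where \[A(k)=\begin{pmatrix} F(k) & y_1(x_2'-x_2)-y_2(x_1'-x_1)\\ (-1)^k\big(y_2'(x_1'-x_1)-y_1'(x_2'-x_2)\big) & F(k)\end{pmatrix},\] \[F(k)=\frac{\big(y_1(x_2'-x_2)-y_2(x_1'-x_1)\big)y_i'+(-1)^k y_i\big(y_2'(x_1'-x_1)-y_1'(x_2'-x_2)\big)}{x_i'-x_i}.\]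
   Context: $K$ is an infinite field of characteristic different from 2. Let $X=\{x_1,x_2,x_1',x_2'\}$ and $Y=\{y_1,y_2,y_1',y_2'\}$, and let $K[X;Y]\cong K[X]\otimes_K E(Y)$ be the free supercommutative algebra: the $x$'s are even commuting variables, the $y$'s are odd pairwise anticommuting variables, and $E(Y)$ is the Grassmann algebra on the vector space with basis $Y$. The division defining $F(k)$ is performed in $K(X)\otimes_K E(Y)$, where $K(X)$ is the field of fractions of $K[X]$. Put $C_1=\begin{pmatrix} x_1&y_1\\ y_1'&x_1'\end{pmatrix}$, $C_2=\begin{pmatrix} x_2&y_2\\ y_2'&x_2'\end{pmatrix}\in M_2(K[X;Y])$. Commutators are $[a,b]=ab-ba$ and are left normed: $[a_1,\ldots,a_k]=[[a_1,\ldots,a_{k-1}],a_k]$. $t_1,t_2$ are free noncommuting variables and $f(C_1,C_2)$ denotes evaluation. *)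

From HB Require Import structures.
From mathcomp Require Import all_boot all_order all_algebra.
From mathcomp Require Import fraction.
From mathcomp Require Import mpoly.
Set Implicit Arguments. Unset Strict Implicit. Unset Printing Implicit Defensive.
Import Order.TTheory GRing.Theory Num.Theory.
Local Open Scope ring_scope.

(* R ⊗ E(Y) with Y = {y1,y2,y1',y2'} (indexed 0,1,2,3), R commutative.  *)
(* An element is the family of its coordinates on the basis            *)
(* e_A = y_{a1} ... y_{ar}  (a1 < ... < ar, A = {a1..ar} ⊆ 'I_4).        *)
Definition G (R : comNzRingType) := {ffun {set 'I_4} -> R}.

Section Grassmann.
Variable R : comNzRingType.

(* e_A e_B = gsign A B e_{A ∪ B} when A, B disjoint *)
Definition gsign (A B : {set 'I_4}) : R :=
  (-1) ^+ #|[set p : 'I_4 * 'I_4 | [&& p.1 \in A, p.2 \in B & (p.2 < p.1)%N]]|.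

Definition gmul (a b : G R) : G R :=
  [ffun S : {set 'I_4} => \sum_(A : {set 'I_4} | A \subset S) gsign A (S :\: A) * a A * b (S :\: A)].

Definition gconst (c : R) : G R := [ffun S : {set 'I_4} => if S == set0 then c else 0].
Definition ggen (j : 'I_4) : G R := [ffun S : {set 'I_4} => if S == [set j] then 1 else 0].
Definition gscale (c : R) (a : G R) : G R := [ffun S : {set 'I_4} => c * a S].

Definition gmx_mul (A B : 'M[G R]_2) : 'M[G R]_2 :=
  \matrix_(i, j) \sum_(l < 2) gmul (A i l) (B l j).
Definition gcomm (A B : 'M[G R]_2) : 'M[G R]_2 := gmx_mul A B - gmx_mul B A.
Definition gmx_scale (c : R) (A : 'M[G R]_2) : 'M[G R]_2 :=
  \matrix_(i, j) gscale c (A i j).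

Definition mx2 (a b c d : G R) : 'M[G R]_2 :=
  \matrix_(i, j) if i == 0 then (if j == 0 then a else b)
                 else (if j == 0 then c else d).
End Grassmann.

Definition gmap (R S : comNzRingType) (f : R -> S) (a : G R) : G S :=
  [ffun A : {set 'I_4} => f (a A)].
Definition gmx_map (R S : comNzRingType) (f : R -> S) (A : 'M[G R]_2) : 'M[G S]_2 :=
  \matrix_(i, j) gmap f (A i j).

(*   'X_0 = x1, 'X_1 = x2, 'X_2 = x1', 'X_3 = x2';                     *)
(* Y generators: 0 = y1, 1 = y2, 2 = y1', 3 = y2'.                     *)
Section Concrete.
Variable K : fieldType.
Local Notation KX := {mpoly K[4]}.
Local Notation KfX := {fraction KX}.

Definition ix (j : nat) : 'I_4 := inord j.

Definition xv (j : nat) : KX := 'X_(ix j).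

Definition Cmat (c : nat) : 'M[G KX]_2 :=
  let u := if c == 1%N then 0%N else 1%N in
  mx2 (gconst (xv u)) (ggen _ (ix u))
      (ggen _ (ix (u + 2))) (gconst (xv (u + 2))).

(* f(C_1,C_2) for f = [t_1, t_2, t_{r_1}, ..., t_{r_s}] (left normed) *)
Definition f_eval (rest : seq nat) : 'M[G KX]_2 :=
  foldl (fun acc j => gcomm acc (Cmat j)) (gcomm (Cmat 1) (Cmat 2)) rest.

Definition embX : KX -> KfX := @FracField.tofrac KX.
Definition xf (j : nat) : KfX := embX (xv j).
Definition d1 : KfX := xf 2 - xf 0.
Definition d2 : KfX := xf 3 - xf 1.
Definition yf (j : nat) : G KfX := ggen _ (ix j).

(* y1 (x2'-x2) - y2 (x1'-x1) *)
Definition alpha : G KfX := gscale d2 (yf 0) - gscale d1 (yf 1).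
(* y2' (x1'-x1) - y1' (x2'-x2) *)
Definition beta : G KfX := gscale d1 (yf 3) - gscale d2 (yf 2).

Definition Fk (k i : nat) : G KfX :=
  let u := if i == 1%N then 0%N else 1%N in
  gscale (xf (u + 2) - xf u)^-1
    (gmul alpha (yf (u + 2)) + gscale ((-1) ^+ k) (gmul (yf u) beta)).

Definition Ak (k i : nat) : 'M[G KfX]_2 :=
  mx2 (Fk k i) alpha (gscale ((-1) ^+ k) beta) (Fk k i).
End Concrete.

From HB Require Import structures.
From mathcomp Require Import all_boot all_order all_algebra.
From mathcomp Require Import fraction.
From mathcomp Require Import mpoly.
From mathcomp Require Import ring.
Import GRing.Theory.
Local Open Scope ring_scope.

(* Write A(k) = [F, a; (-1)^k b, F] with a, b odd of degree one and F even.
   Since F commutes with the odd generators, the commutator of c A(k) with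
   C_j = [x_j, y_j; y_j', x_j'] has off-diagonal entries (x_j' - x_j) c a and
   (x_j' - x_j) c (-1)^(k+1) b, and diagonal entries c (a y_j' - (-1)^k y_j b),
   which by anticommutation of odd elements both equal (x_j' - x_j) c F(k+1).
   Hence each further commutator with C_j multiplies by x_j' - x_j and moves
   from A(k) to A(k+1) with i = j; the induction starts at [C_1, C_2] = A(2). *)

Section GrassmannProduct.
Variable R : comNzRingType.
Implicit Types (a b c : G R) (r : R) (S : {set 'I_4}).

Lemma gaddE a b S : (a + b) S = a S + b S.
Proof. by rewrite !ffunE. Qed.
Lemma goppE a S : (- a) S = - a S.
Proof. by rewrite !ffunE. Qed.
Lemma gsubE a b S : (a - b) S = a S - b S.
Proof. by rewrite !ffunE. Qed.
Lemma gscaleE r a S : gscale r a S = r * a S.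
Proof. by rewrite ffunE. Qed.
Lemma gmulE a b S :
  gmul a b S = \sum_(A : {set 'I_4} | A \subset S) gsign R A (S :\: A) * a A * b (S :\: A).
Proof. by rewrite ffunE. Qed.

Lemma gmulDl a b c : gmul (a + b) c = gmul a c + gmul b c.
Proof.
apply/ffunP=> S; rewrite !(gaddE, gmulE) -big_split /=; apply: eq_bigr => A _.
by rewrite gaddE; ring.
Qed.
Lemma gmulDr a b c : gmul a (b + c) = gmul a b + gmul a c.
Proof.
apply/ffunP=> S; rewrite !(gaddE, gmulE) -big_split /=; apply: eq_bigr => A _.
by rewrite gaddE; ring.
Qed.
Lemma gmulNl a b : gmul (- a) b = - gmul a b.
Proof.
apply/ffunP=> S; rewrite !(goppE, gmulE) -sumrN; apply: eq_bigr => A _.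
by rewrite goppE; ring.
Qed.
Lemma gmulNr a b : gmul a (- b) = - gmul a b.
Proof.
apply/ffunP=> S; rewrite !(goppE, gmulE) -sumrN; apply: eq_bigr => A _.
by rewrite goppE; ring.
Qed.
Lemma gmulBl a b c : gmul (a - b) c = gmul a c - gmul b c.
Proof. by rewrite gmulDl gmulNl. Qed.
Lemma gmulBr a b c : gmul a (b - c) = gmul a b - gmul a c.
Proof. by rewrite gmulDr gmulNr. Qed.
Lemma gmulZl r a b : gmul (gscale r a) b = gscale r (gmul a b).
Proof.
apply/ffunP=> S; rewrite !(gscaleE, gmulE) mulr_sumr; apply: eq_bigr => A _.
by rewrite gscaleE; ring.
Qed.
Lemma gmulZr r a b : gmul a (gscale r b) = gscale r (gmul a b).
Proof.
apply/ffunP=> S; rewrite !(gscaleE, gmulE) mulr_sumr; apply: eq_bigr => A _.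
by rewrite gscaleE; ring.
Qed.

Lemma gsign0l B : gsign R set0 B = 1.
Proof.
rewrite /gsign (_ : [set _ | _] = set0) ?cards0 //.
by apply/setP => p; rewrite !inE.
Qed.
Lemma gsign0r B : gsign R B set0 = 1.
Proof.
rewrite /gsign (_ : [set _ | _] = set0) ?cards0 //.
by apply/setP => p; rewrite !inE andbF.
Qed.

Lemma gmul_constl r a : gmul (gconst r) a = gscale r a.
Proof.
apply/ffunP=> S; rewrite gmulE gscaleE (bigD1 set0) ?sub0set //= big1.
  by rewrite ffunE eqxx gsign0l setD0 mul1r addr0.
by move=> A /andP[_ /negPf]; rewrite ffunE => ->; rewrite mulr0 mul0r.
Qed.
Lemma gmul_constr r a : gmul a (gconst r) = gscale r a.
Proof.
apply/ffunP=> S; rewrite gmulE gscaleE (bigD1 S) ?subxx //= big1.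
  by rewrite ffunE setDv eqxx gsign0r mul1r addr0 mulrC.
move=> A /andP[AS neq]; rewrite ffunE setD_eq0.
case: ifP => [SA|_]; last by rewrite mulr0.
by move: neq; rewrite eqEsubset AS SA.
Qed.

Lemma gmul_ggenl a j S :
  gmul (ggen R j) a S = if j \in S then gsign R [set j] (S :\ j) * a (S :\ j) else 0.
Proof.
rewrite gmulE; case: ifP => jS.
  rewrite (bigD1 [set j]) ?sub1set //= big1 ?addr0; first by rewrite ffunE eqxx mulr1.
  by move=> A /andP[_ nA]; rewrite ffunE (negPf nA) mulr0 mul0r.
rewrite big1 // => A AS; rewrite ffunE; case: eqP => [E|_]; last by rewrite mulr0 mul0r.
by move: AS jS; rewrite E sub1set => ->.
Qed.
Lemma gmul_ggenr a j S :
  gmul a (ggen R j) S = if j \in S then gsign R (S :\ j) [set j] * a (S :\ j) else 0.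
Proof.
rewrite gmulE; case: ifP => jS.
  rewrite (bigD1 (S :\ j)) ?subsetDl //= big1 ?addr0.
    by rewrite ffunE setDDr setDv set0U (setIidPr _) ?sub1set // eqxx mulr1.
  move=> A /andP[AS nA]; rewrite ffunE; case: eqP => [E|_]; last by rewrite mulr0.
  by move: nA; rewrite -E setDDr setDv set0U (setIidPr AS) eqxx.
rewrite big1 // => A AS; rewrite ffunE; case: eqP => [E|_]; last by rewrite mulr0.
have : j \in S :\: A by rewrite E set11.
by rewrite inE jS andbF.
Qed.
End GrassmannProduct.

Section Parity.
Variable R : comNzRingType.
Implicit Types (a b : G R) (r : R).

Definition geven a := forall S : {set 'I_4}, odd #|S| -> a S = 0.

Lemma gsign_ggenC (B : {set 'I_4}) (j : 'I_4) : j \notin B ->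
  gsign R B [set j] = (-1) ^+ #|B| * gsign R [set j] B.
Proof.
(* The inversions of (B, {j}) and of ({j}, B) are the elements of B above j
   and below j respectively. *)
move=> jB; rewrite /gsign.
set inv1 := [set p : 'I_4 * 'I_4 | _]; set inv2 := [set p : 'I_4 * 'I_4 | _].
have -> : inv1 = (fun b : 'I_4 => (b, j)) @: (B :&: [set b : 'I_4 | (j < b)%N]).
  apply/setP => -[x y]; rewrite !inE /=; apply/idP/imsetP.
    by case/and3P => xB /eqP -> lt; exists x; rewrite // !inE xB.
  by case=> b; rewrite !inE => /andP[bB lt] [-> ->]; rewrite bB eqxx.
have -> : inv2 = (fun b : 'I_4 => (j, b)) @: (B :\: [set b : 'I_4 | (j < b)%N]).
  apply/setP => -[x y]; rewrite !inE /=; apply/idP/imsetP.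
    case/and3P => /eqP -> yB lt; exists y; rewrite // !inE yB andbT -leqNgt ltnW //.
  case=> b; rewrite !inE => /andP[nlt bB] [-> ->]; rewrite bB eqxx /=.
  rewrite ltn_neqAle leqNgt nlt andbT; apply/eqP => e.
  by move: jB; rewrite (_ : j = b) ?bB //; apply: val_inj.
rewrite -[in #|B|](cardsID [set b : 'I_4 | (j < b)%N]) !card_imset; last 2 first.
- by move=> x y [].
- by move=> x y [].
by rewrite exprD -mulrA -expr2 sqrr_sign mulr1.
Qed.

Lemma geven_gmul_ggenC a j : geven a -> gmul a (ggen R j) = gmul (ggen R j) a.
Proof.
move=> ev_a; apply/ffunP => S; rewrite gmul_ggenr gmul_ggenl; case: ifP => // jS.
have [odd_Sj | even_Sj] := boolP (odd #|S :\ j|); first by rewrite ev_a ?mulr0.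
by rewrite gsign_ggenC ?setD11 // -signr_odd (negbTE even_Sj) mul1r.
Qed.

Lemma gsign11 (i j : 'I_4) : gsign R [set i] [set j] = (-1) ^+ (j < i)%N.
Proof.
rewrite /gsign; congr (_ ^+ _).
have [ji|/negbTE ji] := boolP (j < i)%N.
  rewrite (_ : [set _ | _] = [set (i, j)]) ?cards1 //.
  apply/setP => -[x y]; rewrite !inE /= xpair_eqE.
  by case: eqP => [->|] //=; case: eqP => [->|]; rewrite ?ji ?andbF.
rewrite (_ : [set _ | _] = set0) ?cards0 //.
apply/setP => -[x y]; rewrite !inE /=.
by case: eqP => [->|] //=; case: eqP => [->|]; rewrite ?ji ?andbF.
Qed.

Lemma gmul_ggen i j : gmul (ggen R i) (ggen R j) =
  [ffun S => if (S == [set i; j]) && (i != j) then gsign R [set i] [set j] else 0].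
Proof.
apply/ffunP => S; rewrite gmul_ggenl !ffunE.
case: ifP => iS; last first.
  by case: (eqVneq S [set i; j]) => //= E; move: iS; rewrite E set21.
case: eqP => E.
  have jS : j \in S :\ i by rewrite E set11.
  have ij : i != j by move: jS; rewrite !inE => /andP[]; rewrite eq_sym.
  have -> : S = [set i; j].
    apply/setP => x; rewrite !inE; case: (eqVneq x i) => [->|xi] //=.
    by rewrite -in_set1 -E !inE xi.
  by rewrite eqxx ij /= setU1K ?mulr1 // inE ij.
rewrite mulr0; case: (eqVneq S [set i; j]) => //= E2; case: (eqVneq i j) => //= ij.
by case: E; rewrite E2 setU1K // inE ij.
Qed.

Lemma gmul_ggenC i j : gmul (ggen R i) (ggen R j) = - gmul (ggen R j) (ggen R i).
Proof.
apply/ffunP => S; rewrite !gmul_ggen !ffunE setUC eq_sym.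
case: (eqVneq i j) => [->|ij]; rewrite ?andbF ?oppr0 //= andbT.
case: eqP => _; rewrite ?oppr0 // !gsign11.
case: (ltngtP i j) => e; rewrite ?opprK //.
by case/eqP: ij; apply: val_inj.
Qed.

Lemma geven_gmul_ggen i j : geven (gmul (ggen R i) (ggen R j)).
Proof.
move=> S oS; rewrite gmul_ggen ffunE; case: eqP => //= E; case: (eqVneq i j) => //= ij.
by move: oS; rewrite E cards2 ij.
Qed.
Lemma gevenD a b : geven a -> geven b -> geven (a + b).
Proof. by move=> ea eb S oS; rewrite gaddE ea ?eb ?addr0. Qed.
Lemma gevenB a b : geven a -> geven b -> geven (a - b).
Proof. by move=> ea eb S oS; rewrite gsubE ea ?eb ?subr0. Qed.
Lemma gevenZ r a : geven a -> geven (gscale r a).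
Proof. by move=> ea S oS; rewrite gscaleE ea ?mulr0. Qed.

Section TwoGenerators.
Variables (p q : R) (i l : 'I_4).
Let v := gscale p (ggen R i) - gscale q (ggen R l).

Lemma gmul_lin2_ggenC j : gmul v (ggen R j) = - gmul (ggen R j) v.
Proof.
rewrite gmulBl gmulBr !gmulZl !gmulZr (gmul_ggenC i j) (gmul_ggenC l j).
by apply/ffunP => S; rewrite !(gsubE, goppE, gscaleE); ring.
Qed.
Lemma geven_gmul_lin2l j : geven (gmul v (ggen R j)).
Proof. by rewrite gmulBl !gmulZl; apply: gevenB; apply: gevenZ; apply: geven_gmul_ggen. Qed.
Lemma geven_gmul_lin2r j : geven (gmul (ggen R j) v).
Proof. by rewrite gmulBr !gmulZr; apply: gevenB; apply: gevenZ; apply: geven_gmul_ggen. Qed.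
End TwoGenerators.
End Parity.

Arguments geven {R} a.
Arguments geven_gmul_ggenC {R a} j.

Section Matrices.
Variable R : comNzRingType.
Implicit Types a b c d : G R.

Lemma mx2_ext (A B : 'M[G R]_2) :
  A 0 0 = B 0 0 -> A 0 1 = B 0 1 -> A 1 0 = B 1 0 -> A 1 1 = B 1 1 -> A = B.
Proof.
have ord2 (i : 'I_2) : i = 0 \/ i = 1 by case: i => [[|[|//]] ?]; [left|right]; apply: val_inj.
move=> e00 e01 e10 e11; apply/matrixP => i j.
by case: (ord2 i) => ->; case: (ord2 j) => ->.
Qed.

Lemma gsum_ord2 (F : 'I_2 -> G R) : \sum_(l < 2) F l = F 0 + F 1.
Proof. by rewrite big_ord_recl big_ord1; congr (_ + _); congr F; apply: val_inj. Qed.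

Lemma gcomm_mx2 a b c d a' b' c' d' :
  gcomm (mx2 a b c d) (mx2 a' b' c' d') =
  mx2 (gmul a a' + gmul b c' - (gmul a' a + gmul b' c))
      (gmul a b' + gmul b d' - (gmul a' b + gmul b' d))
      (gmul c a' + gmul d c' - (gmul c' a + gmul d' c))
      (gmul c b' + gmul d d' - (gmul c' b + gmul d' d)).
Proof. by apply: mx2_ext; rewrite !mxE !gsum_ord2 !mxE. Qed.

Lemma gmx_scale_mx2 r a b c d :
  gmx_scale r (mx2 a b c d) = mx2 (gscale r a) (gscale r b) (gscale r c) (gscale r d).
Proof. by apply: mx2_ext; rewrite !mxE. Qed.

Lemma gmx_scale1 (A : 'M[G R]_2) : gmx_scale 1 A = A.
Proof. by apply/matrixP => i j; apply/ffunP => S; rewrite !mxE gscaleE mul1r. Qed.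

Lemma gcomm_mx2_gen a b c d (x x' : R) (j j' : 'I_4) :
  gcomm (mx2 a b c d) (mx2 (gconst x) (ggen R j) (ggen R j') (gconst x')) =
  mx2 (gmul b (ggen R j') - gmul (ggen R j) c)
      (gmul a (ggen R j) - gmul (ggen R j) d + gscale (x' - x) b)
      (gmul d (ggen R j') - gmul (ggen R j') a - gscale (x' - x) c)
      (gmul c (ggen R j) - gmul (ggen R j') b).
Proof.
rewrite gcomm_mx2 !gmul_constl !gmul_constr.
by apply: mx2_ext; rewrite !mxE; apply/ffunP => S;
  rewrite !(gsubE, gaddE, gscaleE); ring.
Qed.
End Matrices.

Section Morphisms.
Variables (R S : comNzRingType) (f : {rmorphism R -> S}).

Lemma gmap_mul (a b : G R) : gmap f (gmul a b) = gmul (gmap f a) (gmap f b).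
Proof.
apply/ffunP => T; rewrite !ffunE rmorph_sum; apply: eq_bigr => A _.
by rewrite !ffunE !rmorphM /gsign rmorphXn rmorphN1.
Qed.
Lemma gmapD (a b : G R) : gmap f (a + b) = gmap f a + gmap f b.
Proof. by apply/ffunP => T; rewrite !ffunE rmorphD. Qed.
Lemma gmapB (a b : G R) : gmap f (a - b) = gmap f a - gmap f b.
Proof. by apply/ffunP => T; rewrite !ffunE rmorphB. Qed.
Lemma gmap_const r : gmap f (gconst r) = gconst (f r).
Proof. by apply/ffunP => T; rewrite !ffunE; case: ifP; rewrite ?rmorph0. Qed.
Lemma gmap_ggen j : gmap f (ggen R j) = ggen S j.
Proof. by apply/ffunP => T; rewrite !ffunE; case: ifP; rewrite ?rmorph0 ?rmorph1. Qed.

Lemma gmx_map_mx2 (a b c d : G R) :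
  gmx_map f (mx2 a b c d) = mx2 (gmap f a) (gmap f b) (gmap f c) (gmap f d).
Proof. by apply: mx2_ext; rewrite !mxE. Qed.

Lemma gmx_map_gcomm (A B : 'M[G R]_2) :
  gmx_map f (gcomm A B) = gcomm (gmx_map f A) (gmx_map f B).
Proof.
by apply/matrixP => i j; rewrite !mxE !gsum_ord2 gmapB !gmapD !gmap_mul !mxE.
Qed.
End Morphisms.

Section CommutatorSteps.
Variable R : fieldType.

Lemma gcomm_base (x0 x1 x2 x3 : R) (i0 i1 i2 i3 : 'I_4) : x3 - x1 != 0 ->
  let al := gscale (x3 - x1) (ggen R i0) - gscale (x2 - x0) (ggen R i1) in
  let be := gscale (x2 - x0) (ggen R i3) - gscale (x3 - x1) (ggen R i2) in
  let F := gscale (x3 - x1)^-1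
             (gmul al (ggen R i3) + gscale ((-1) ^+ 2) (gmul (ggen R i1) be)) in
  gcomm (mx2 (gconst x0) (ggen R i0) (ggen R i2) (gconst x2))
        (mx2 (gconst x1) (ggen R i1) (ggen R i3) (gconst x3)) =
  mx2 F al (gscale ((-1) ^+ 2) be) F.
Proof.
move=> dx al be F; rewrite gcomm_mx2_gen !gmul_constl !gmul_constr.
rewrite /F /al /be !gmulBl !gmulBr !gmulZl !gmulZr (gmul_ggenC _ i2 i1) (gmul_ggenC _ i3 i0).
by congr (mx2 _ _ _ _); apply/ffunP => S;
  rewrite !(gsubE, gaddE, goppE, gscaleE); field.
Qed.

Lemma gcomm_step (F al be : G R) (c x x' : R) (k : nat) (j j' : 'I_4) :
  geven F -> x' - x != 0 ->
  gmul be (ggen R j) = - gmul (ggen R j) be ->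
  gmul (ggen R j') al = - gmul al (ggen R j') ->
  let F' := gscale (x' - x)^-1
              (gmul al (ggen R j') + gscale ((-1) ^+ k.+1) (gmul (ggen R j) be)) in
  gcomm (gmx_scale c (mx2 F al (gscale ((-1) ^+ k) be) F))
        (mx2 (gconst x) (ggen R j) (ggen R j') (gconst x')) =
  gmx_scale (c * (x' - x)) (mx2 F' al (gscale ((-1) ^+ k.+1) be) F').
Proof.
move=> evF dx be_j al_j' F'; rewrite gmx_scale_mx2 gcomm_mx2_gen gmx_scale_mx2.
rewrite /F' !gmulZl !gmulZr (geven_gmul_ggenC j evF) (geven_gmul_ggenC j' evF) be_j al_j'.
by congr (mx2 _ _ _ _); apply/ffunP => S;
  rewrite !(gsubE, gaddE, goppE, gscaleE) ?exprS; field.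
Qed.
End CommutatorSteps.

Section Concrete.
Variable K : fieldType.
Local Notation KX := {mpoly K[4]}.
Local Notation Cf j := (gmx_map (@embX K) (Cmat K j)).

Lemma xf_sub_neq0 (a b : nat) :
  (a < 4)%N -> (b < 4)%N -> a != b -> xf K a - xf K b != 0.
Proof.
move=> a4 b4 ab; rewrite /xf /embX -rmorphB tofrac_eq0.
have ix_ab : ix a != ix b.
  by apply: contra ab => /eqP/(congr1 (@nat_of_ord 4)); rewrite /ix !inordK // => ->.
apply/eqP => /(congr1 (fun p : KX => p@_(U_(ix a))%MM)).
rewrite mcoeffB /xv !mcoeffXU eqxx eq_sym (negPf ix_ab) subr0 mcoeff0 => /eqP.
by rewrite oner_eq0.
Qed.

(* C_j is built from x, y of index cidx j and x', y' of index cidx j + 2. *)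
Definition cidx (j : nat) : nat := if j == 1%N then 0%N else 1%N.

Lemma CfE j : Cf j = mx2 (gconst (xf K (cidx j))) (yf K (cidx j))
                         (yf K (cidx j + 2)) (gconst (xf K (cidx j + 2))).
Proof. by rewrite /Cmat gmx_map_mx2 !gmap_const !gmap_ggen. Qed.

Lemma geven_Fk k i : geven (Fk K k i).
Proof.
apply: gevenZ; apply: gevenD; last apply: gevenZ.
  exact: geven_gmul_lin2l.
exact: geven_gmul_lin2r.
Qed.

Lemma gcomm_Ak_Cf c k i j :
  gcomm (gmx_scale c (Ak K k i)) (Cf j) =
  gmx_scale (c * (xf K (cidx j + 2) - xf K (cidx j))) (Ak K k.+1 j).
Proof.
rewrite CfE /Ak [Fk K k.+1 j]/Fk -/(cidx j) /yf.
apply: (@gcomm_step _ (Fk K k i) (alpha K) (beta K)).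
- exact: geven_Fk.
- by rewrite /cidx; case: (j == 1%N); apply: xf_sub_neq0.
- exact: gmul_lin2_ggenC.
- by rewrite gmul_lin2_ggenC opprK.
Qed.

Lemma gcomm_C1_C2 : gcomm (Cf 1) (Cf 2) = Ak K 2 2.
Proof. by rewrite !CfE /Ak /Fk /alpha /beta /yf; apply: gcomm_base; apply: xf_sub_neq0. Qed.

Lemma gmx_map_foldl_gcomm rest (A : 'M[G KX]_2) :
  gmx_map (@embX K) (foldl (fun acc j => gcomm acc (Cmat K j)) A rest) =
  foldl (fun acc j => gcomm acc (Cf j)) (gmx_map (@embX K) A) rest.
Proof. by elim: rest A => //= j rest IH A; rewrite IH gmx_map_gcomm. Qed.

Lemma foldl_gcomm_Ak rest c k i : all (fun j => (j == 1%N) || (j == 2%N)) rest ->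
  foldl (fun acc j => gcomm acc (Cf j)) (gmx_scale c (Ak K k i)) rest =
  gmx_scale (c * d1 K ^+ count (pred1 1%N) rest * d2 K ^+ count (pred1 2%N) rest)
            (Ak K (k + size rest) (last i rest)).
Proof.
elim: rest c k i => [|j rest IH] c k i /=; first by rewrite !expr0 !mulr1 addn0.
case/andP => j12 rest12; rewrite gcomm_Ak_Cf (IH _ _ _ rest12) addSnnS; congr (gmx_scale _ _).
by case/orP: j12 => /eqP ->; rewrite /cidx /d1 /d2 /= ?add0n ?add1n !exprS; ring.
Qed.
End Concrete.

Theorem lemma6 (K : fieldType)
  (K_infinite : forall s : seq K, exists x : K, x \notin s)
  (K_char : (2%:R : K) != 0)
  (rest : seq nat) (Hrest : all (fun j => (j == 1%N) || (j == 2%N)) rest) :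
  let idx := [:: 1%N, 2%N & rest] in
  let n := count (pred1 1%N) idx in
  let m := count (pred1 2%N) idx in
  let k := size idx in
  let i := last 2%N rest in
  gmx_map (@embX K) (f_eval K rest) =
  gmx_scale (d1 K ^+ (n - 1) * d2 K ^+ (m - 1)) (Ak K k i).
Proof.
move=> idx n m k i.
rewrite /f_eval gmx_map_foldl_gcomm gmx_map_gcomm gcomm_C1_C2.
rewrite -[Ak K 2 2]gmx_scale1 (foldl_gcomm_Ak _ _ _ _ _ Hrest) mul1r.
by congr (gmx_scale (_ ^+ _ * _ ^+ _) _); rewrite /n /m /= subn1.
Qed.
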